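(* Let $\alpha_a$ be a labeled dGL hybrid game and $\varphi$ a formula. The model predictive Angelic subvalue map $M$ for $\alpha_a$ and Angel winning condition $\varphi$ is an inductive Angelic subvalue map for $\alpha_a$ compatible with $\varphi$ (i.e. $\models M(\mathsf{end})\rightarrow\varphi$). Dually, the model predictive Demonic subvalue map $M'$ for $\alpha_a$ and Demon winning condition $\varphi$ is an inductive Demonic subvalue map for $\alpha_a$.
   Context: Differential game logic (dGL). Hybrid games are generated by $\alpha,\beta ::= x:=e \mid \alpha;\beta \mid ?Q \mid \{x'=f(x)\,\&\,Q\} \mid \alpha^{*} \mid \alpha\cup\beta \mid x:=* \mid\ !Q \mid \{x'=f(x)\,\&\,Q\}^{d} \mid \alpha^{\times} \mid \alpha\cap\beta \mid x:=\otimes$, with $x$ a real variable (vector for ODEs), $e,f(x)$ polynomial terms, $Q$ a formula. Players Angel and Demon: $x:=e$ deterministic assignment; in $x:=*$ Angel (in $x:=\otimes$ Demon) assigns any real; in $\{x'=f(x)\&Q\}$ Angel (in $\{\cdot\}^d$ Demon) chooses a duration $r\ge 0$ of following the ODE with $Q$ true throughout; $?Q$ makes Angel lose and $!Q$ makes Demon lose if $Q$ is false; in $\alpha\cup\beta$ Angel (in $\alpha\cap\beta$ Demon) chooses the branch; in $\alpha^*$ Angel (in $\alpha^\times$ Demon) decides before each iteration whether to repeat or stop; $\alpha;\beta$ sequential. Formulas: polynomial (in)equalities closed under connectives, real quantifiers, and modalities $\langle\alpha\rangle\varphi$ (Angel can win $\alpha$ reaching $\varphi$) and $[\alpha]\varphi\equiv\neg\langle\alpha\rangle\neg\varphi$,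 with the standard dGL winning-region semantics ($\langle x:=*\rangle\varphi\leftrightarrow\exists x\varphi$, $\langle x:=\otimes\rangle\varphi\leftrightarrow\forall x\varphi$, $\langle ?Q\rangle\varphi\leftrightarrow Q\wedge\varphi$, $\langle !Q\rangle\varphi\leftrightarrow(Q\rightarrow\varphi)$, $\cup$ as disjunction, $\cap$ as conjunction, $\langle\alpha;\beta\rangle\varphi\leftrightarrow\langle\alpha\rangle\langle\beta\rangle\varphi$, Angel ODE existential, Demon ODE universal, $\langle\alpha^*\rangle$ least and $\langle\alpha^\times\rangle$ greatest fixed point). $\models$ denotes validity. Labels: every node of the syntax tree carries a unique label; $\alpha_a$ has root label $a$; $\mathrm{nodes}(\alpha_a)$ is its set of subgame labels; $\mathsf{end}$ is a special extra label. A map $S$ assigns formulas to a label set containing $\mathrm{nodes}(\alpha_a)\cup\{\mathsf{end}\}$; $S\{\mathsf{end}\mapsto Q\}$ replaces the value at $\mathsf{end}$. $\gamma_g,\delta_d$ denote immediate subgames with root labels $g,d$. Game suffix: $\mathrm{suffix}_a(\alpha_a)=\alpha_a$; for $b\ne a$: for loops $((\gamma_g)^* )_a,((\gamma_g)^\times)_a$ it is $\mathrm{suffix}_b(\gamma_g);\alpha_a$; for $\cup,\cap$ the suffix within the branch containing $b$; for $(\gamma_g;\delta_d)_a$ it is $\mathrm{suffix}_b(\gamma_g);\delta_d$ if $b\in\mathrm{nodes}(\gamma_g)$ else $\mathrm{suffix}_b(\delta_d)$. Model predictive Angelic subvalue map: $M(\mathsf{end})=\varphi$, $M(b)=\langle\mathrm{suffix}_b(\alpha_a)\rangle\varphi$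 for $b\in\mathrm{nodes}(\alpha_a)$; model predictive Demonic: $M'(\mathsf{end})=\varphi$, $M'(b)=[\mathrm{suffix}_b(\alpha_a)]\varphi$. Angelic existential projection $\mathcal{P}(\alpha_a,S)$: $(x:=* )_a\mapsto(x:=* )_a;?S(\mathsf{end})$; Angel ODE $\mapsto$ ODE$;?S(\mathsf{end})$; $(\gamma_g\cup\delta_d)_a\mapsto(?S(g);\mathcal{P}(\gamma_g,S))\cup(?S(d);\mathcal{P}(\delta_d,S))$; $((\gamma_g)^* )_a\mapsto(?S(g);\mathcal{P}(\gamma_g,S\{\mathsf{end}\mapsto S(a)\}))^*;?S(\mathsf{end})$; $(\gamma_g;\delta_d)_a\mapsto\mathcal{P}(\gamma_g,S\{\mathsf{end}\mapsto S(d)\});\mathcal{P}(\delta_d,S)$; $\cap\mapsto\mathcal{P}(\gamma_g,S)\cap\mathcal{P}(\delta_d,S)$; $((\gamma_g)^\times)_a\mapsto\mathcal{P}(\gamma_g,S\{\mathsf{end}\mapsto S(a)\})^\times$; other atomic games unchanged (labels preserved, new nodes fresh labels). Demonic existential projection $\mathcal{D}(\alpha_a,S)$: $(x:=\otimes)_a\mapsto(x:=\otimes)_a;!S(\mathsf{end})$; Demon ODE $\mapsto$ ODE$^d;!S(\mathsf{end})$; $(\gamma_g\cap\delta_d)_a\mapsto(!S(g);\mathcal{D}(\gamma_g,S))\cap(!S(d);\mathcal{D}(\delta_d,S))$; $((\gamma_g)^\times)_a\mapsto(!S(g);\mathcal{D}(\gamma_g,S\{\mathsf{end}\mapsto S(g)\vee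 S(\mathsf{end})\}))^\times;!S(\mathsf{end})$; $(\gamma_g;\delta_d)_a\mapsto\mathcal{D}(\gamma_g,S\{\mathsf{end}\mapsto S(d)\});\mathcal{D}(\delta_d,S)$; $\cup\mapsto\mathcal{D}(\gamma_g,S)\cup\mathcal{D}(\delta_d,S)$; $((\gamma_g)^* )_a\mapsto\mathcal{D}(\gamma_g,S\{\mathsf{end}\mapsto S(a)\})^*$; other atomic games unchanged. Inductive Angelic subvalue map ($S\Vdash\alpha_a$), recursively: atomic $\alpha$ (all assignments, tests, ODEs): $\models S(a)\rightarrow\langle\alpha\rangle S(\mathsf{end})$; $\cup$: $\models S(a)\rightarrow S(g)\vee S(d)$, $S\Vdash\gamma_g$, $S\Vdash\delta_d$; $\cap$: $\models S(a)\rightarrow S(g)\wedge S(d)$ and both; $;$: $\models S(a)\rightarrow S(g)$, $S\{\mathsf{end}\mapsto S(d)\}\Vdash\gamma_g$, $S\Vdash\delta_d$; $((\gamma_g)^* )_a$: $\models S(a)\rightarrow\langle\mathcal{P}(\alpha_a,S)\rangle S(\mathsf{end})$ and $S\{\mathsf{end}\mapsto S(a)\}\Vdash\gamma_g$; $((\gamma_g)^\times)_a$: $\models S(a)\rightarrow S(g)\wedge S(\mathsf{end})$ and $S\{\mathsf{end}\mapsto S(a)\}\Vdash\gamma_g$. Inductive Demonic subvalue map, recursively: atomic: $\models S(a)\rightarrow[\alpha]S(\mathsf{end})$; $\cup$: $\models S(a)\rightarrow S(g)\wedge S(d)$ and both; $\cap$: $\models S(a)\rightarrow S(g)\vee S(d)$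 and both; $;$: $\models S(a)\rightarrow S(g)$, $S\{\mathsf{end}\mapsto S(d)\}$ for $\gamma_g$, $S$ for $\delta_d$; $((\gamma_g)^* )_a$: $\models S(a)\rightarrow S(\mathsf{end})\wedge S(g)$ and $S\{\mathsf{end}\mapsto S(a)\}$ for $\gamma_g$; $((\gamma_g)^\times)_a$: $\models S(a)\rightarrow[\mathcal{D}(\alpha_a,S)]S(\mathsf{end})$ and $S\{\mathsf{end}\mapsto S(a)\}$ for $\gamma_g$. *)

From Stdlib Require Import Reals QArith List Arith.
Open Scope R_scope.

Definition var := nat.
Definition state := var -> R.

Inductive term : Type :=
| TVar (x : var)
| TConst (q : Q)
| TPlus (e1 e2 : term)
| TTimes (e1 e2 : term)
| TNeg (e : term).

(* An ODE  x1'=f1(x), ..., xn'=fn(x)  is a list of (variable, right-hand side) *)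
Definition ode := list (var * term).

Definition label := nat.

Inductive fml : Type :=
| FTrue | FFalse
| FLe (e1 e2 : term) | FLt (e1 e2 : term) | FEq (e1 e2 : term)
| FNot (p : fml) | FAnd (p q : fml) | FOr (p q : fml) | FImp (p q : fml)
| FForall (x : var) (p : fml) | FExists (x : var) (p : fml)
| FDia (a : game) (p : fml)
with game : Type :=
| GAsgn   (l : label) (x : var) (e : term)
| GSeq    (l : label) (a b : game)
| GTest   (l : label) (Q : fml)
| GOde    (l : label) (o : ode) (Q : fml)
| GLoop   (l : label) (a : game)
| GChoice (l : label) (a b : game)
| GRand   (l : label) (x : var)
| GDTest  (l : label) (Q : fml)
| GDOde   (l : label) (o : ode) (Q : fml)
| GDLoop  (l : label) (a : game)
| GDChoice (l : label) (a b : game)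
| GDRand  (l : label) (x : var).

Definition FBox (a : game) (p : fml) : fml := FNot (FDia a (FNot p)).

Fixpoint teval (s : state) (e : term) : R :=
  match e with
  | TVar x => s x
  | TConst q => Q2R q
  | TPlus e1 e2 => teval s e1 + teval s e2
  | TTimes e1 e2 => teval s e1 * teval s e2
  | TNeg e => - teval s e
  end.

Definition upd (s : state) (x : var) (v : R) : state :=
  fun y => if Nat.eqb y x then v else s y.

Definition ode_sol (o : ode) (Q : state -> Prop) (s : state) (r : R)
    (y : R -> state) : Prop :=
  0 <= r /\
  (forall v, y 0 v = s v) /\
  (forall t, 0 <= t <= r -> Q (y t)) /\
  (forall v, ~ In v (map fst o) -> forall t, 0 <= t <= r -> y t v = s v) /\
  (forall x e, In (x, e) o -> forall t, 0 <= t <= r ->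
       derivable_pt_lim (fun tau => y tau x) t (teval (y t) e)).

Fixpoint fsem (p : fml) (s : state) {struct p} : Prop :=
  match p with
  | FTrue => True
  | FFalse => False
  | FLe e1 e2 => teval s e1 <= teval s e2
  | FLt e1 e2 => teval s e1 < teval s e2
  | FEq e1 e2 => teval s e1 = teval s e2
  | FNot p => ~ fsem p s
  | FAnd p q => fsem p s /\ fsem q s
  | FOr p q => fsem p s \/ fsem q s
  | FImp p q => fsem p s -> fsem q s
  | FForall x p => forall v, fsem p (upd s x v)
  | FExists x p => exists v, fsem p (upd s x v)
  | FDia a p => gsem a (fsem p) s
  end
(* gsem a X = winning region of Angel in game a for goal region X *)
with gsem (a : game) (X : state -> Prop) (s : state) {struct a} : Prop :=
  match a with
  | GAsgn _ x e => X (upd s x (teval s e))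
  | GSeq _ a b => gsem a (gsem b X) s
  | GTest _ Q => fsem Q s /\ X s
  | GOde _ o Q => exists r y, ode_sol o (fsem Q) s r y /\ X (y r)
  | GLoop _ a =>            (* least fixed point of Z |-> X ∪ gsem a Z *)
      forall Z : state -> Prop,
        (forall t, X t \/ gsem a Z t -> Z t) -> Z s
  | GChoice _ a b => gsem a X s \/ gsem b X s
  | GRand _ x => exists v, X (upd s x v)
  | GDTest _ Q => fsem Q s -> X s
  | GDOde _ o Q => forall r y, ode_sol o (fsem Q) s r y -> X (y r)
  | GDLoop _ a =>           (* greatest fixed point of Z |-> X ∩ gsem a Z *)
      exists Z : state -> Prop,
        (forall t, Z t -> X t /\ gsem a Z t) /\ Z s
  | GDChoice _ a b => gsem a X s /\ gsem b X s
  | GDRand _ x => forall v, X (upd s x v)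
  end.

Definition valid (p : fml) : Prop := forall s, fsem p s.

Definition lbl (a : game) : label :=
  match a with
  | GAsgn l _ _ | GSeq l _ _ | GTest l _ | GOde l _ _ | GLoop l _
  | GChoice l _ _ | GRand l _ | GDTest l _ | GDOde l _ _ | GDLoop l _
  | GDChoice l _ _ | GDRand l _ => l
  end.

Fixpoint nodes (a : game) : list label :=
  match a with
  | GSeq l a b | GChoice l a b | GDChoice l a b => l :: nodes a ++ nodes b
  | GLoop l a | GDLoop l a => l :: nodes a
  | _ => lbl a :: nil
  end.

Definition well_labeled (a : game) : Prop := NoDup (nodes a).

Definition in_nodes (b : label) (a : game) : bool := existsb (Nat.eqb b) (nodes a).

Inductive lab : Type := LNode (n : label) | LEnd.

Definition smap := lab -> fml.

Definition L (a : game) : lab := LNode (lbl a).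

Definition upd_end (S : smap) (Q : fml) : smap :=
  fun b => match b with LEnd => Q | LNode n => S (LNode n) end.

(* Label given to nodes newly created by suffix / projection constructions.
   The semantics of games does not depend on labels, so the choice is immaterial. *)
Definition new_lab : label := 0%nat.

Fixpoint suffix (b : label) (a : game) : game :=
  if Nat.eqb b (lbl a) then a else
  match a with
  | GLoop _ g | GDLoop _ g => GSeq new_lab (suffix b g) a
  | GChoice _ g d | GDChoice _ g d =>
      if in_nodes b g then suffix b g else suffix b d
  | GSeq _ g d =>
      if in_nodes b g then GSeq new_lab (suffix b g) d else suffix b d
  | _ => a
  end.

Fixpoint projA (S : smap) (a : game) : game :=
  match a with
  | GRand l x => GSeq new_lab (GRand l x) (GTest new_lab (S LEnd))
  | GOde l o Q => GSeq new_lab (GOde l o Q) (GTest new_lab (S LEnd))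
  | GChoice l g d =>
      GChoice l (GSeq new_lab (GTest new_lab (S (L g))) (projA S g))
                (GSeq new_lab (GTest new_lab (S (L d))) (projA S d))
  | GLoop l g =>
      GSeq new_lab
        (GLoop l (GSeq new_lab (GTest new_lab (S (L g)))
                               (projA (upd_end S (S (LNode l))) g)))
        (GTest new_lab (S LEnd))
  | GSeq l g d => GSeq l (projA (upd_end S (S (L d))) g) (projA S d)
  | GDChoice l g d => GDChoice l (projA S g) (projA S d)
  | GDLoop l g => GDLoop l (projA (upd_end S (S (LNode l))) g)
  | _ => a
  end.

Fixpoint projD (S : smap) (a : game) : game :=
  match a with
  | GDRand l x => GSeq new_lab (GDRand l x) (GDTest new_lab (S LEnd))
  | GDOde l o Q => GSeq new_lab (GDOde l o Q) (GDTest new_lab (S LEnd))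
  | GDChoice l g d =>
      GDChoice l (GSeq new_lab (GDTest new_lab (S (L g))) (projD S g))
                 (GSeq new_lab (GDTest new_lab (S (L d))) (projD S d))
  | GDLoop l g =>
      GSeq new_lab
        (GDLoop l (GSeq new_lab (GDTest new_lab (S (L g)))
                    (projD (upd_end S (FOr (S (L g)) (S LEnd))) g)))
        (GDTest new_lab (S LEnd))
  | GSeq l g d => GSeq l (projD (upd_end S (S (L d))) g) (projD S d)
  | GChoice l g d => GChoice l (projD S g) (projD S d)
  | GLoop l g => GLoop l (projD (upd_end S (S (LNode l))) g)
  | _ => a
  end.

Fixpoint AngSub (S : smap) (a : game) : Prop :=
  match a with
  | GChoice l g d =>
      valid (FImp (S (LNode l)) (FOr (S (L g)) (S (L d)))) /\
      AngSub S g /\ AngSub S d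
  | GDChoice l g d =>
      valid (FImp (S (LNode l)) (FAnd (S (L g)) (S (L d)))) /\
      AngSub S g /\ AngSub S d
  | GSeq l g d =>
      valid (FImp (S (LNode l)) (S (L g))) /\
      AngSub (upd_end S (S (L d))) g /\ AngSub S d
  | GLoop l g =>
      valid (FImp (S (LNode l)) (FDia (projA S a) (S LEnd))) /\
      AngSub (upd_end S (S (LNode l))) g
  | GDLoop l g =>
      valid (FImp (S (LNode l)) (FAnd (S (L g)) (S LEnd))) /\
      AngSub (upd_end S (S (LNode l))) g
  | _ =>
      valid (FImp (S (L a)) (FDia a (S LEnd)))
  end.

Fixpoint DemSub (S : smap) (a : game) : Prop :=
  match a with
  | GChoice l g d =>
      valid (FImp (S (LNode l)) (FAnd (S (L g)) (S (L d)))) /\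
      DemSub S g /\ DemSub S d
  | GDChoice l g d =>
      valid (FImp (S (LNode l)) (FOr (S (L g)) (S (L d)))) /\
      DemSub S g /\ DemSub S d
  | GSeq l g d =>
      valid (FImp (S (LNode l)) (S (L g))) /\
      DemSub (upd_end S (S (L d))) g /\ DemSub S d
  | GLoop l g =>
      valid (FImp (S (LNode l)) (FAnd (S LEnd) (S (L g)))) /\
      DemSub (upd_end S (S (LNode l))) g
  | GDLoop l g =>
      valid (FImp (S (LNode l)) (FBox (projD S a) (S LEnd))) /\
      DemSub (upd_end S (S (LNode l))) g
  | _ =>
      valid (FImp (S (L a)) (FBox a (S LEnd)))
  end.

(* values at labels outside nodes(a) ∪ {end} are irrelevant; we put phi there *)
Definition MPang (a : game) (phi : fml) : smap :=
  fun b => match b with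
           | LEnd => phi
           | LNode n => if in_nodes n a then FDia (suffix n a) phi else phi
           end.

Definition MPdem (a : game) (phi : fml) : smap :=
  fun b => match b with
           | LEnd => phi
           | LNode n => if in_nodes n a then FBox (suffix n a) phi else phi
           end.

(* We prove both parts for every map S that is semantically model predictive
   for a goal region K: S(end) holds exactly on K and S(b) exactly on Angel's
   winning region of the suffix game from b.  M is such a map for K = phi, and
   so is the pointwise negation of M' for K = not phi, since [b]phi is
   not <b>not phi.  For such maps each clause of an inductive subvalue map is an
   identity between winning regions, except for the loops whose clause goes
   through an existential projection.  There the inserted tests are harmless:
   along a play in which Angel still reaches K, the test ?S(g) is met whenever
   g is about to be played, because S(g) holds exactly where g can still be
   won; dually, a Demonic test !S(g) fails only where Angel can still win g. *)

From Stdlib Require Import Reals QArith List Arith Classical.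

Lemma gsem_mono a (X Y : state -> Prop) :
  (forall t, X t -> Y t) -> forall s, gsem a X s -> gsem a Y s.
Proof.
  revert X Y.
  induction a; simpl; intros X Y HXY s H.
  - exact (HXY _ H).
  - exact (IHa1 _ _ (IHa2 _ _ HXY) s H).
  - destruct H; split; auto.
  - destruct H as (r & y & Hsol & HX); exists r, y; auto.
  - intros Z HZ. apply H. intros t [Ht | Ht]; apply HZ; auto.
  - destruct H; [left | right]; eauto.
  - destruct H as [v Hv]; exists v; auto.
  - auto.
  - auto.
  - destruct H as (Z & HZ & Zs). exists Z; split; auto.
    intros t Zt; destruct (HZ t Zt); auto.
  - destruct H; split; eauto.
  - auto.
Qed.

Lemma gsem_loop_fold l g X s :
  X s \/ gsem g (gsem (GLoop l g) X) s -> gsem (GLoop l g) X s.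
Proof.
  intros H Z HZ. apply HZ. destruct H as [H | H]; [left; exact H | right].
  apply (gsem_mono g _ _ (fun u Hu => Hu Z HZ) _ H).
Qed.

Lemma gsem_dloop_unfold l g X s :
  gsem (GDLoop l g) X s -> X s /\ gsem g (gsem (GDLoop l g) X) s.
Proof.
  intros (Z & HZ & Zs). destruct (HZ s Zs) as [Xs Gs]. split; [exact Xs |].
  apply (gsem_mono g Z); [| exact Gs]. intros u Zu. exists Z; auto.
Qed.

Lemma gsem_dloop_fold l g X s :
  X s /\ gsem g (gsem (GDLoop l g) X) s -> gsem (GDLoop l g) X s.
Proof.
  intros H. exists (fun u => X u /\ gsem g (gsem (GDLoop l g) X) u). split; [| exact H].
  intros u [Xu Gu]. split; [exact Xu |].
  apply (gsem_mono g _ _ (gsem_dloop_unfold l g X) _ Gu).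
Qed.

Lemma NoDup_app_disjoint {A : Type} (xs ys : list A) y :
  NoDup (xs ++ ys) -> In y xs -> ~ In y ys.
Proof.
  induction xs as [| x xs IH]; simpl; intros ND Hy; [contradiction |].
  apply NoDup_cons_iff in ND as [Hx ND]. destruct Hy as [<- | Hy]; auto.
  intros Hys; apply Hx, in_or_app; auto.
Qed.

Lemma lbl_in_nodes a : In (lbl a) (nodes a).
Proof. destruct a; simpl; auto. Qed.

Lemma suffix_lbl a : suffix (lbl a) a = a.
Proof. destruct a; simpl; rewrite Nat.eqb_refl; reflexivity. Qed.

Lemma in_nodes_true n a : In n (nodes a) -> in_nodes n a = true.
Proof. intros H. apply existsb_exists. exists n; split; [exact H | apply Nat.eqb_refl]. Qed.

Lemma in_nodes_false n a : ~ In n (nodes a) -> in_nodes n a = false.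
Proof.
  intros H. apply not_true_iff_false. intros E.
  apply existsb_exists in E as (m & Hm & E). apply Nat.eqb_eq in E as ->. auto.
Qed.

Lemma well_labeled_children {l g d} :
  NoDup (l :: nodes g ++ nodes d) -> well_labeled g /\ well_labeled d.
Proof.
  intros ND. apply NoDup_cons_iff in ND as [_ ND].
  split; [exact (NoDup_app_remove_r _ _ ND) | exact (NoDup_app_remove_l _ _ ND)].
Qed.

Lemma well_labeled_body {l g} : NoDup (l :: nodes g) -> well_labeled g.
Proof. intros ND. apply NoDup_cons_iff in ND as [_ ND]. exact ND. Qed.

Lemma left_child_node {l g d n} : NoDup (l :: nodes g ++ nodes d) -> In n (nodes g) ->
  (n =? l) = false /\ in_nodes n g = true.
Proof.
  intros ND Hn. apply NoDup_cons_iff in ND as [Hl _]. split.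
  - apply Nat.eqb_neq. intros ->. apply Hl, in_or_app; auto.
  - apply in_nodes_true, Hn.
Qed.

Lemma right_child_node {l g d n} : NoDup (l :: nodes g ++ nodes d) -> In n (nodes d) ->
  (n =? l) = false /\ in_nodes n g = false.
Proof.
  intros ND Hn. apply NoDup_cons_iff in ND as [Hl ND]. split.
  - apply Nat.eqb_neq. intros ->. apply Hl, in_or_app; auto.
  - apply in_nodes_false. intros Hg. exact (NoDup_app_disjoint _ _ _ ND Hg Hn).
Qed.

Lemma loop_body_node {l g n} : NoDup (l :: nodes g) -> In n (nodes g) -> (n =? l) = false.
Proof.
  intros ND Hn. apply NoDup_cons_iff in ND as [Hl _].
  apply Nat.eqb_neq. intros ->. exact (Hl Hn).
Qed.

Definition model_predictive (S : smap) (a : game) (K : state -> Prop) : Prop :=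
  (forall s, fsem (S LEnd) s <-> K s) /\
  (forall n, In n (nodes a) -> forall s, fsem (S (LNode n)) s <-> gsem (suffix n a) K s).

Lemma model_predictive_root {S a K} :
  model_predictive S a K -> forall s, fsem (S (L a)) s <-> gsem a K s.
Proof. intros [_ HN] s. rewrite (HN _ (lbl_in_nodes a) s), suffix_lbl. reflexivity. Qed.

Lemma model_predictive_seq {S l g d K} : well_labeled (GSeq l g d) ->
  model_predictive S (GSeq l g d) K ->
  model_predictive (upd_end S (S (L d))) g (gsem d K) /\ model_predictive S d K.
Proof.
  intros WL [HE HN].
  assert (Md : model_predictive S d K).
  { split; [exact HE |]. intros n Hn s.
    rewrite (HN n (in_cons _ _ _ (in_or_app _ _ _ (or_intror Hn)))).
    destruct (right_child_node WL Hn) as [E1 E2]. simpl. rewrite E1, E2. reflexivity. }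
  split; [split | exact Md].
  - exact (model_predictive_root Md).
  - intros n Hn s. rewrite (HN n (in_cons _ _ _ (in_or_app _ _ _ (or_introl Hn)))).
    destruct (left_child_node WL Hn) as [E1 E2]. simpl. rewrite E1, E2. reflexivity.
Qed.

Lemma model_predictive_choice {S l g d K} : well_labeled (GChoice l g d) ->
  model_predictive S (GChoice l g d) K ->
  model_predictive S g K /\ model_predictive S d K.
Proof.
  intros WL [HE HN]. split; split; try exact HE; intros n Hn s.
  - rewrite (HN n (in_cons _ _ _ (in_or_app _ _ _ (or_introl Hn)))).
    destruct (left_child_node WL Hn) as [E1 E2]. simpl. rewrite E1, E2. reflexivity.
  - rewrite (HN n (in_cons _ _ _ (in_or_app _ _ _ (or_intror Hn)))).
    destruct (right_child_node WL Hn) as [E1 E2]. simpl. rewrite E1, E2. reflexivity.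
Qed.

Lemma model_predictive_dchoice {S l g d K} : well_labeled (GDChoice l g d) ->
  model_predictive S (GDChoice l g d) K ->
  model_predictive S g K /\ model_predictive S d K.
Proof.
  intros WL [HE HN]. split; split; try exact HE; intros n Hn s.
  - rewrite (HN n (in_cons _ _ _ (in_or_app _ _ _ (or_introl Hn)))).
    destruct (left_child_node WL Hn) as [E1 E2]. simpl. rewrite E1, E2. reflexivity.
  - rewrite (HN n (in_cons _ _ _ (in_or_app _ _ _ (or_intror Hn)))).
    destruct (right_child_node WL Hn) as [E1 E2]. simpl. rewrite E1, E2. reflexivity.
Qed.

Lemma model_predictive_loop {S l g K} : well_labeled (GLoop l g) ->
  model_predictive S (GLoop l g) K ->
  model_predictive (upd_end S (S (LNode l))) g (gsem (GLoop l g) K).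
Proof.
  intros WL M. split; [exact (model_predictive_root M) |].
  intros n Hn s. rewrite (proj2 M n (in_cons _ _ _ Hn)).
  simpl. rewrite (loop_body_node WL Hn). reflexivity.
Qed.

Lemma model_predictive_dloop {S l g K} : well_labeled (GDLoop l g) ->
  model_predictive S (GDLoop l g) K ->
  model_predictive (upd_end S (S (LNode l))) g (gsem (GDLoop l g) K).
Proof.
  intros WL M. split; [exact (model_predictive_root M) |].
  intros n Hn s. rewrite (proj2 M n (in_cons _ _ _ Hn)).
  simpl. rewrite (loop_body_node WL Hn). reflexivity.
Qed.

Lemma gsem_projA g : forall S K X s, well_labeled g -> model_predictive S g K ->
  gsem g (fun u => K u /\ X u) s -> gsem (projA S g) X s.
Proof.
  induction g; intros S K X s WL M H;
    try exact (gsem_mono _ _ _ (fun u Hu => proj2 Hu) _ H).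
  - destruct (model_predictive_seq WL M) as [Mg Md].
    destruct (well_labeled_children WL) as [WLg WLd].
    apply (IHg1 _ _ (gsem (projA S g2) X) _ WLg Mg).
    refine (gsem_mono g1 _ _ _ _ H).
    intros t Ht. split.
    + exact (gsem_mono g2 _ _ (fun u Hu => proj1 Hu) _ Ht).
    + exact (IHg2 _ _ _ _ WLd Md Ht).
  - destruct H as (r & y & Hsol & Kr & Xr).
    exists r, y. split; [exact Hsol |]. split; [apply (proj1 M), Kr | exact Xr].
  - set (Body := GSeq new_lab (GTest new_lab (S (L g)))
                   (projA (upd_end S (S (LNode l))) g)).
    set (Y := fun t => fsem (S LEnd) t /\ X t).
    pose proof (model_predictive_loop WL M) as Mg.
    (* Induction on the least fixed point; the unprojected winning region is
       carried along because it discharges the tests ?S(g). *)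
    enough (HB : gsem (GLoop l g) K s /\ gsem (GLoop l Body) Y s) by exact (proj2 HB).
    apply H. intros t [[Kt Xt] | Ht].
    + split; apply gsem_loop_fold; left; [exact Kt | split; [apply (proj1 M), Kt | exact Xt]].
    + assert (Gt : gsem g (gsem (GLoop l g) K) t)
        by exact (gsem_mono g _ _ (fun u Hu => proj1 Hu) _ Ht).
      split; apply gsem_loop_fold; right; [exact Gt | split].
      * exact (proj2 (model_predictive_root Mg t) Gt).
      * exact (IHg _ _ _ _ (well_labeled_body WL) Mg Ht).
  - destruct (model_predictive_choice WL M) as [Mg Md].
    destruct (well_labeled_children WL) as [WLg WLd].
    destruct H as [H | H]; [left | right]; split.
    + apply (model_predictive_root Mg). exact (gsem_mono g1 _ _ (fun u Hu => proj1 Hu) _ H).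
    + exact (IHg1 _ _ _ _ WLg Mg H).
    + apply (model_predictive_root Md). exact (gsem_mono g2 _ _ (fun u Hu => proj1 Hu) _ H).
    + exact (IHg2 _ _ _ _ WLd Md H).
  - destruct H as [v [Kv Xv]]. exists v. split; [apply (proj1 M), Kv | exact Xv].
  - pose proof (model_predictive_dloop WL M) as Mg.
    exists (gsem (GDLoop l g) (fun u => K u /\ X u)). split; [| exact H].
    intros t Ht. destruct (gsem_dloop_unfold _ _ _ _ Ht) as [[_ Xt] Gt]. split; [exact Xt |].
    apply (IHg _ _ _ _ (well_labeled_body WL) Mg).
    refine (gsem_mono g _ _ _ _ Gt). intros u Hu. split; [| exact Hu].
    exact (gsem_mono (GDLoop l g) _ _ (fun v Hv => proj1 Hv) _ Hu).
  - destruct (model_predictive_dchoice WL M) as [Mg Md].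
    destruct (well_labeled_children WL) as [WLg WLd].
    destruct H as [H1 H2]. split; eauto.
Qed.

Lemma model_predictive_dia {S a K} : model_predictive S a K ->
  valid (FImp (S (L a)) (FDia a (S LEnd))).
Proof.
  intros M s Hs. apply (model_predictive_root M) in Hs.
  exact (gsem_mono a _ _ (fun t => proj2 (proj1 M t)) s Hs).
Qed.

Lemma model_predictive_AngSub a : forall S K, well_labeled a ->
  model_predictive S a K -> AngSub S a.
Proof.
  induction a; intros S K WL M; try exact (model_predictive_dia M).
  - destruct (model_predictive_seq WL M) as [Mg Md].
    destruct (well_labeled_children WL) as [WLg WLd].
    split; [| split; eauto].
    intros s Hs. apply (model_predictive_root Mg), (model_predictive_root M), Hs.
  - split; [| exact (IHa _ _ (well_labeled_body WL) (model_predictive_loop WL M))].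
    intros s Hs. apply (gsem_projA _ _ K _ _ WL M).
    refine (gsem_mono _ K _ _ _ (proj1 (model_predictive_root M s) Hs)).
    intros t Kt. split; [exact Kt | exact (proj2 (proj1 M t) Kt)].
  - destruct (model_predictive_choice WL M) as [Mg Md].
    destruct (well_labeled_children WL) as [WLg WLd].
    split; [| split; eauto].
    intros s Hs. apply (model_predictive_root M) in Hs as [Hs | Hs]; [left | right].
    + apply (model_predictive_root Mg), Hs.
    + apply (model_predictive_root Md), Hs.
  - pose proof (model_predictive_dloop WL M) as Mg.
    split; [| exact (IHa _ _ (well_labeled_body WL) Mg)].
    intros s Hs. apply (model_predictive_root M), gsem_dloop_unfold in Hs as [Ks Gs].
    split; [apply (model_predictive_root Mg), Gs | apply (proj1 M), Ks].
  - destruct (model_predictive_dchoice WL M) as [Mg Md].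
    destruct (well_labeled_children WL) as [WLg WLd].
    split; [| split; eauto].
    intros s Hs. apply (model_predictive_root M) in Hs as [H1 H2].
    split; [apply (model_predictive_root Mg), H1 | apply (model_predictive_root Md), H2].
Qed.

Definition neg_smap (S : smap) : smap := fun b => FNot (S b).

Lemma model_predictive_neg_root {S a C} : model_predictive (neg_smap S) a C ->
  forall s, fsem (S (L a)) s -> ~ gsem a C s.
Proof. intros M s Hs G. exact (proj2 (model_predictive_root M s) G Hs). Qed.

Lemma model_predictive_neg_root_or {S a C} : model_predictive (neg_smap S) a C ->
  forall s, fsem (S (L a)) s \/ gsem a C s.
Proof.
  intros M s. destruct (classic (fsem (S (L a)) s)) as [E | E]; [left; exact E | right].
  exact (proj1 (model_predictive_root M s) E).
Qed.

Lemma model_predictive_neg_end_or {S a C} : model_predictive (neg_smap S) a C ->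
  forall s, fsem (S LEnd) s \/ C s.
Proof.
  intros M s. destruct (classic (fsem (S LEnd) s)) as [E | E]; [left; exact E | right].
  exact (proj1 (proj1 M s) E).
Qed.

Lemma model_predictive_box {S a C} : model_predictive (neg_smap S) a C ->
  valid (FImp (S (L a)) (FBox a (S LEnd))).
Proof.
  intros M s Hs Hg. apply (model_predictive_neg_root M s Hs).
  exact (gsem_mono a _ _ (fun t => proj1 (proj1 M t)) s Hg).
Qed.

Lemma model_predictive_projD_dloop_body {S l g C} : well_labeled (GDLoop l g) ->
  model_predictive (neg_smap S) (GDLoop l g) C ->
  model_predictive (neg_smap (upd_end S (FOr (S (L g)) (S LEnd)))) g (gsem (GDLoop l g) C).
Proof.
  intros WL M. pose proof (model_predictive_dloop WL M) as Mg.
  split; [| exact (proj2 Mg)]. intros t.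
  pose proof (model_predictive_root Mg t) as Rg. pose proof (proj1 M t) as Re.
  cbn [neg_smap upd_end fsem L] in Rg, Re |- *. split.
  - intros N. apply gsem_dloop_fold. split; [apply Re | apply Rg]; tauto.
  - intros Gt. apply gsem_dloop_unfold in Gt. rewrite <- Re, <- Rg in Gt. tauto.
Qed.

Lemma gsem_projD_dloop l g
  (IH : forall S C Y s, well_labeled g -> model_predictive (neg_smap S) g C ->
        gsem (projD S g) Y s -> gsem g (fun u => C u \/ Y u) s)
  S C Y s : well_labeled (GDLoop l g) -> model_predictive (neg_smap S) (GDLoop l g) C ->
  gsem (projD S (GDLoop l g)) Y s -> gsem (GDLoop l g) (fun u => C u \/ Y u) s.
Proof.
  intros WL M H. pose proof (model_predictive_projD_dloop_body WL M) as Mb.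
  set (G := gsem (GDLoop l g) C).
  destruct H as (Z & HZ & Zs).
  (* Coinvariant Z \/ G: where Demon's test !S(g) fails, Angel wins the
     rest of the loop. *)
  exists (fun t => Z t \/ G t). split; [| left; exact Zs].
  intros t [Zt | Gt].
  - destruct (HZ t Zt) as [HY Hg]. split.
    + destruct (model_predictive_neg_end_or M t) as [E | Ct];
        [right; exact (HY E) | left; exact Ct].
    + destruct (model_predictive_neg_root_or Mb t) as [E | Gg].
      * refine (gsem_mono g _ _ _ _ (IH _ _ _ _ (well_labeled_body WL) Mb (Hg E))).
        intros u [Hu | Hu]; [right | left]; exact Hu.
      * exact (gsem_mono g _ _ (fun u Hu => or_intror Hu) _ Gg).
  - destruct (gsem_dloop_unfold l g C t Gt) as [Ct Gg]. split; [left; exact Ct |].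
    exact (gsem_mono g _ _ (fun u Hu => or_intror Hu) _ Gg).
Qed.

Lemma gsem_projD g : forall S C Y s, well_labeled g -> model_predictive (neg_smap S) g C ->
  gsem (projD S g) Y s -> gsem g (fun u => C u \/ Y u) s.
Proof.
  induction g; intros S C Y s WL M H;
    try exact (gsem_mono _ _ _ (fun u Hu => or_intror Hu) _ H).
  - destruct (model_predictive_seq WL M) as [Mg Md].
    destruct (well_labeled_children WL) as [WLg WLd].
    refine (gsem_mono g1 _ _ _ _ (IHg1 _ _ _ _ WLg Mg H)).
    intros t [Ct | Ht].
    + exact (gsem_mono g2 _ _ (fun u Hu => or_introl Hu) _ Ct).
    + exact (IHg2 _ _ _ _ WLd Md Ht).
  - pose proof (model_predictive_loop WL M) as Mg.
    apply H. intros t [Ht | Ht]; apply gsem_loop_fold; [left; right; exact Ht | right].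
    refine (gsem_mono g _ _ _ _ (IHg _ _ _ _ (well_labeled_body WL) Mg Ht)).
    intros u [Hu | Hu]; [| exact Hu].
    exact (gsem_mono _ _ _ (fun v Hv => or_introl Hv) _ Hu).
  - destruct (model_predictive_choice WL M) as [Mg Md].
    destruct (well_labeled_children WL) as [WLg WLd].
    destruct H as [H | H]; [left | right]; eauto.
  - intros r y Hsol.
    destruct (model_predictive_neg_end_or M (y r)) as [E | Cr];
      [right; exact (H r y Hsol E) | left; exact Cr].
  - exact (gsem_projD_dloop l g IHg S C Y s WL M H).
  - destruct (model_predictive_dchoice WL M) as [Mg Md].
    destruct (well_labeled_children WL) as [WLg WLd].
    destruct H as [H1 H2]. split.
    + destruct (model_predictive_neg_root_or Mg s) as [E | Gg]; [eauto |].
      exact (gsem_mono g1 _ _ (fun u Hu => or_introl Hu) _ Gg).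
    + destruct (model_predictive_neg_root_or Md s) as [E | Gd]; [eauto |].
      exact (gsem_mono g2 _ _ (fun u Hu => or_introl Hu) _ Gd).
  - intros v.
    destruct (model_predictive_neg_end_or M (upd s x v)) as [E | Cv];
      [right; exact (H v E) | left; exact Cv].
Qed.

Lemma model_predictive_DemSub a : forall S C, well_labeled a ->
  model_predictive (neg_smap S) a C -> DemSub S a.
Proof.
  induction a; intros S C WL M; try exact (model_predictive_box M).
  - destruct (model_predictive_seq WL M) as [Mg Md].
    destruct (well_labeled_children WL) as [WLg WLd].
    split; [| split; eauto].
    intros s Hs.
    destruct (@model_predictive_neg_root_or (upd_end S (S (L a2))) _ _ Mg s) as [E | Gg];
      [exact E |].
    contradiction (model_predictive_neg_root M s Hs Gg).
  - pose proof (model_predictive_loop WL M) as Mg.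
    split; [| exact (IHa _ _ (well_labeled_body WL) Mg)].
    intros s Hs. pose proof (model_predictive_neg_root M s Hs) as N. split.
    + destruct (model_predictive_neg_end_or M s) as [E | Cs]; [exact E |].
      contradiction (N (gsem_loop_fold _ _ _ _ (or_introl Cs))).
    + destruct (@model_predictive_neg_root_or (upd_end S (S (LNode l))) _ _ Mg s)
        as [E | Gg]; [exact E |].
      contradiction (N (gsem_loop_fold _ _ _ _ (or_intror Gg))).
  - destruct (model_predictive_choice WL M) as [Mg Md].
    destruct (well_labeled_children WL) as [WLg WLd].
    split; [| split; eauto].
    intros s Hs. pose proof (model_predictive_neg_root M s Hs) as N. split.
    + destruct (model_predictive_neg_root_or Mg s) as [E | Gg]; [exact E |].
      contradiction (N (or_introl Gg)).
    + destruct (model_predictive_neg_root_or Md s) as [E | Gd]; [exact E |].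
      contradiction (N (or_intror Gd)).
  - pose proof (model_predictive_dloop WL M) as Mg.
    split; [| exact (IHa _ _ (well_labeled_body WL) Mg)].
    intros s Hs Hg. apply (model_predictive_neg_root M s Hs).
    refine (gsem_mono _ _ _ _ _ (gsem_projD _ _ _ _ _ WL M Hg)).
    intros t [Ct | Nt]; [exact Ct | exact (proj1 (proj1 M t) Nt)].
  - destruct (model_predictive_dchoice WL M) as [Mg Md].
    destruct (well_labeled_children WL) as [WLg WLd].
    split; [| split; eauto].
    intros s Hs.
    destruct (model_predictive_neg_root_or Mg s) as [E | Gg]; [left; exact E |].
    destruct (model_predictive_neg_root_or Md s) as [E | Gd]; [right; exact E |].
    contradiction (model_predictive_neg_root M s Hs (conj Gg Gd)).
Qed.

Lemma MPang_model_predictive a phi : model_predictive (MPang a phi) a (fsem phi).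
Proof.
  split; [reflexivity |].
  intros n Hn s. simpl. rewrite (in_nodes_true _ _ Hn). reflexivity.
Qed.

Lemma MPdem_model_predictive a phi :
  model_predictive (neg_smap (MPdem a phi)) a (fun s => ~ fsem phi s).
Proof.
  split; [reflexivity |].
  intros n Hn s. simpl. rewrite (in_nodes_true _ _ Hn). simpl.
  split; [apply NNPP | tauto].
Qed.

Theorem mainTheorem7 (a : game) (phi : fml) :
  well_labeled a ->
  (AngSub (MPang a phi) a /\ valid (FImp (MPang a phi LEnd) phi)) /\
  DemSub (MPdem a phi) a.
Proof.
  intros WL. split; [split |].
  - exact (model_predictive_AngSub a _ _ WL (MPang_model_predictive a phi)).
  - intros s Hs. exact Hs.
  - exact (model_predictive_DemSub a _ _ WL (MPdem_model_predictive a phi)).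
Qed.
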